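(* Let $\Gamma=(V,E,w)$ be a finite simple weighted digraph with vertex set $V=\{1,\dots,n\}$ and non-negative weights (with $w_{ij}=0$ iff $(i,j)\notin E$), and let $L=D-A$ be its graph Laplacian. Then $\sigma(L)=\{d^{+}(1),\dots,d^{+}(n)\}$ (as multisets) if and only if $\Gamma$ is acyclic.
   Context: $d^{+}(i)=\sum_{j\in V} w_{ij}$ is the out-degree of vertex $i$, $D=\mathrm{diag}(d^{+}(1),\dots,d^{+}(n))$, $A=[w_{ij}]$, and $L=D-A$. $\sigma(L)$ denotes the multiset of eigenvalues of $L$ counted with algebraic multiplicity. A digraph is acyclic if it contains no directed cycle. *)

From mathcomp Require Import all_boot all_order all_algebra.
Set Implicit Arguments. Unset Strict Implicit. Unset Printing Implicit Defensive.
Import Order.TTheory GRing.Theory Num.Theory.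
Local Open Scope ring_scope.

Definition wd_arc (R : pzRingType) (n : nat) (w : 'M[R]_n) : rel 'I_n :=
  fun i j => w i j != 0.

Definition outdeg (R : pzRingType) (n : nat) (w : 'M[R]_n) (i : 'I_n) : R :=
  \sum_(j < n) w i j.

Definition laplacian (R : pzRingType) (n : nat) (w : 'M[R]_n) : 'M[R]_n :=
  diag_mx (\row_i outdeg w i) - w.

(* sigma(M) = multiset s (algebraic multiplicities): the characteristic
   polynomial of M is prod_{x in s} (X - x), i.e. s is the multiset of its
   roots (in any extension field). *)
Definition spectrum_is (R : comNzRingType) (n : nat) (M : 'M[R]_n) (s : seq R) :=
  char_poly M = \prod_(x <- s) ('X - x%:P).

(* A directed cycle: nonempty sequence of distinct vertices v0 .. vk with arcs
   v0->v1->...->vk->v0. *)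
Definition acyclic (T : eqType) (e : rel T) : Prop :=
  forall s : seq T, s != [::] -> uniq s -> ~~ cycle e s.

(* Expand det('X - L) by the Leibniz formula: since L = D - A with zero
   diagonal in A, a permutation s contributes sign(s) times the product of
   the weights w i (s i) over its moved points, times ('X - d^+(i)) for each
   fixed point i.  The identity gives prod_i ('X - d^+(i)), so the spectrum is
   the out-degree multiset iff the other terms cancel.  If the digraph is
   acyclic, every non-identity permutation uses a missing arc and its term
   vanishes.  Otherwise some permutation follows arcs only; take one with the
   least number k of moved points.  It is a single k-cycle, as restricting it
   to one orbit gives another arc-following permutation.  In the coefficient
   of 'X^(n-k), permutations moving more points do not contribute (degree too
   small), those moving fewer follow a missing arc, and those moving exactly k
   are k-cycles, all of sign (-1)^(k+1): the coefficient is (-1)^(k+1) times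
   a sum of nonnegative weights containing a positive one. *)

From mathcomp Require Import all_boot all_order all_algebra all_fingroup.
From mathcomp Require Import zify.
Import Order.TTheory GRing.Theory Num.Theory.
Set Implicit Arguments. Unset Strict Implicit. Unset Printing Implicit Defensive.

Section PermSupport.
Variable T : finType.
Implicit Types (s : {perm T}) (x y : T).

Definition psupport s : {set T} := [set x | s x != x].

Lemma psupport_eq0 s : (psupport s == set0) = (s == 1%g).
Proof.
apply/eqP/eqP => [s0 | ->]; last by apply/setP => x; rewrite !inE perm1 eqxx.
apply/permP => x; rewrite perm1; apply/eqP.
by have := in_set0 x; rewrite -s0 inE => /negbFE.
Qed.

Lemma porbitS s x y : (s y \in porbit s x) = (y \in porbit s x).
Proof. by have := porbit_perm s 1 y; rewrite expg1 porbit_sym => ->; rewrite porbit_sym. Qed.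

Lemma porbit_fix s x : s x = x -> porbit s x = [set x].
Proof.
move=> sx; apply/setP => y; rewrite in_set1; apply/idP/eqP => [/porbitP[i ->]|->].
  by elim: i => [|i IHi]; rewrite ?expg0 ?perm1 // expgS permM sx.
exact: porbit_id.
Qed.

Lemma porbit_psupport s x : x \in psupport s -> porbit s x \subset psupport s.
Proof.
rewrite inE => sx; apply/subsetP => y yx; rewrite inE; apply: contra sx => /eqP sy.
by move: yx; rewrite porbit_sym porbit_fix // in_set1 => /eqP->; rewrite sy.
Qed.

Lemma porbit_astabs s x : s \in 'N(porbit s x | 'P)%g.
Proof.
by rewrite !inE /=; apply/subsetP => y; rewrite !inE /= /aperm porbitS.
Qed.

Lemma restr_porbitE s x y :
  restr_perm (porbit s x) s y = if y \in porbit s x then s y else y.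
Proof.
case: ifP => [yx | /negbT yNx]; first exact: restr_permE (porbit_astabs s x) yx.
exact: out_perm (restr_perm_on _ _) yNx.
Qed.

Lemma psupport_restr_porbit s x :
  x \in psupport s -> psupport (restr_perm (porbit s x) s) = porbit s x.
Proof.
move=> sx; apply/setP => y; rewrite [in LHS]inE restr_porbitE.
case: ifP => [yx | _]; last by rewrite eqxx.
by have := subsetP (porbit_psupport sx) y yx; rewrite inE.
Qed.

Lemma cycle_traject_porbit s x : path.cycle (frel s) (traject s x #|porbit s x|).
Proof.
have [m Em] : exists m, #|porbit s x| = m.+1.
  by case: #|_| (card_porbit_neq0 s x) => // m _; exists m.
have sx_m : iter m.+1 s x = x by rewrite -Em iter_porbit.
by rewrite Em /= -[x in rcons _ x]sx_m iterSr -trajectSr fpath_traject.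
Qed.

Section Cycle.
Variables (s : {perm T}) (x : T).
Hypothesis supp_porbit : psupport s = porbit s x.

Lemma porbits_cycle : porbits s = porbit s x |: [set [set y] | y in ~: psupport s].
Proof.
have fixP y : y \notin psupport s -> s y = y by rewrite inE negbK => /eqP.
apply/setP => B; apply/imsetP/setU1P => [[y _ ->] | [-> | /imsetP[y yNs ->]]].
- have [ys | yNs] := boolP (y \in psupport s).
    by left; apply/eqP; rewrite eq_porbit_mem -supp_porbit.
  by right; rewrite porbit_fix ?fixP //; apply: imset_f; rewrite inE.
- by exists x.
- by exists y; rewrite // porbit_fix // fixP // -in_setC.
Qed.

Lemma odd_perm_cycle : odd_perm s = ~~ odd #|psupport s|.
Proof.
have orbitNfix : porbit s x \notin [set [set y] | y in ~: psupport s].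
  apply/imsetP => -[y yNs xy]; have : y \in porbit s x by rewrite xy set11.
  by rewrite -supp_porbit; apply/negP; rewrite -in_setC.
rewrite /odd_perm porbits_cycle cardsU1 orbitNfix card_imset; last exact: set1_inj.
by rewrite -(cardsC (psupport s)) !oddD; case: odd; case: odd.
Qed.

End Cycle.

End PermSupport.

Section PermAlong.
Variables (T : finType) (e : rel T).
Implicit Types (s t : {perm T}) (x : T).

Definition perm_along s := [forall i in psupport s, e i (s i)].

Lemma perm_along_restr s x : perm_along s -> perm_along (restr_perm (porbit s x) s).
Proof.
move=> /forall_inP along; apply/forall_inP => y; rewrite inE restr_porbitE.
by case: ifP => [_ sy | _]; [apply: along; rewrite inE | rewrite eqxx].
Qed.

Lemma min_perm_along_cycle s x :
    perm_along s -> x \in psupport s ->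
    (forall t, perm_along t -> t != 1%g -> #|psupport s| <= #|psupport t|) ->
  psupport s = porbit s x.
Proof.
move=> along sx min_s; have supp_t := psupport_restr_porbit sx.
apply/eqP; rewrite eq_sym eqEcard porbit_psupport //= -supp_t.
apply: min_s; first exact: perm_along_restr.
by apply: contraTneq (porbit_id s x) => r1; rewrite -supp_t r1 inE perm1 eqxx.
Qed.

Lemma acyclic_perm_along_eq1 s : acyclic e -> perm_along s -> s = 1%g.
Proof.
move=> acyc /forall_inP along; apply/permP => x; rewrite perm1.
apply/eqP/negPn/negP => sx; have xs : x \in psupport s by rewrite inE.
have orbit_nil : traject s x #|porbit s x| != [::].
  by rewrite -size_eq0 size_traject card_porbit_neq0.
apply: (negP (acyc _ orbit_nil (uniq_traject_porbit s x))).
apply: (@sub_in_cycle _ (porbit s x)) (cycle_traject_porbit s x).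
  move=> y z yx _ /eqP <-; exact/along/(subsetP (porbit_psupport xs)).
by apply/allP => y; rewrite -porbit_traject.
Qed.

Lemma cycle_perm_along c :
  irreflexive e -> c != [::] -> uniq c -> path.cycle e c ->
  exists2 s, perm_along s & s != 1%g.
Proof.
case: c => [//|x c] irr _ uc cy; set c' := x :: c in uc cy *.
pose f y := if y \in c' then next c' y else y.
have f_inj : injective f.
  rewrite /f => y z; case: ifP => yc; case: ifP => zc.
  - exact: (can_inj (prev_next uc)).
  - by move=> yz; rewrite -yz mem_next yc in zc.
  - by move=> yz; rewrite yz mem_next zc in yc.
  - by [].
exists (perm f_inj).
  apply/forall_inP => y; rewrite inE permE /f.
  by case: ifP => [yc _ | _]; [exact: next_cycle | rewrite eqxx].
apply/eqP => f1; have := next_cycle cy (mem_head x c).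
have : perm f_inj x = x by rewrite f1 perm1.
by rewrite permE /f mem_head => ->; rewrite irr.
Qed.

Lemma acyclicP :
  irreflexive e -> reflect (acyclic e) [forall s : {perm T}, perm_along s ==> (s == 1%g)].
Proof.
move=> irr; apply: (iffP forall_inP) => [along_1 c nc uc | acyc s along].
  apply/negP => cy; have [s along s1] := cycle_perm_along irr nc uc cy.
  by case/negP: s1; apply: along_1.
by apply/eqP; apply: acyclic_perm_along_eq1.
Qed.

End PermAlong.

Local Open Scope ring_scope.

Section LaplacianExpansion.
Variables (R : comNzRingType) (n : nat) (w : 'M[R]_n).
Hypothesis w_noloop : forall i, w i i = 0.

Definition perm_weight (s : 'S_n) : R := \prod_(i in psupport s) w i (s i).

Definition fixed_factor (s : 'S_n) : {poly R} :=
  \prod_(i in ~: psupport s) ('X - (outdeg w i)%:P).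

Definition laplacian_term (s : 'S_n) : {poly R} :=
  ((-1) ^+ s * perm_weight s)%:P * fixed_factor s.

Lemma char_poly_mx_laplacianE i j :
  char_poly_mx (laplacian w) i j = if i == j then 'X - (outdeg w i)%:P else (w i j)%:P.
Proof.
rewrite !mxE; case: eqP => [<- | _]; first by rewrite w_noloop subr0.
by rewrite !mulr0n !sub0r polyCN opprK.
Qed.

Lemma char_poly_laplacian : char_poly (laplacian w) = \sum_s laplacian_term s.
Proof.
rewrite /char_poly /determinant; apply/eq_bigr => s _.
rewrite /laplacian_term polyCM rmorph_sign -mulrA.
congr (_ * _); rewrite /perm_weight /fixed_factor rmorph_prod.
rewrite (bigID (mem (psupport s))) /=; congr (_ * _).
  by apply: eq_bigr => i; rewrite inE char_poly_mx_laplacianE eq_sym => /negPf->.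
apply: eq_big => [i | i]; first by rewrite in_setC.
by rewrite inE negbK => /eqP si; rewrite char_poly_mx_laplacianE si eqxx.
Qed.

Lemma laplacian_term1 : laplacian_term 1 = \prod_i ('X - (outdeg w i)%:P).
Proof.
have supp1 : psupport (1 : 'S_n) = set0 by apply/eqP; rewrite psupport_eq0.
rewrite /laplacian_term /perm_weight /fixed_factor supp1 odd_perm1 big_set0 mulr1.
by rewrite mul1r setC0; apply: eq_bigl => i; rewrite inE.
Qed.

Lemma spectrum_outdegE :
  spectrum_is (laplacian w) [seq outdeg w i | i <- enum 'I_n] <->
  \sum_(s | s != 1%g) laplacian_term s = 0.
Proof.
rewrite /spectrum_is big_map big_enum /= char_poly_laplacian (bigD1 1%g) //=.
by rewrite laplacian_term1 -[RHS in _ = RHS]addr0; split => [/addrI | ->].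
Qed.

Lemma perm_weight_not_along s : ~~ perm_along (wd_arc w) s -> perm_weight s = 0.
Proof.
case/forall_inPn => i si /negPn /eqP wi0.
by rewrite /perm_weight (bigD1 i) //= wi0 mul0r.
Qed.

Lemma size_fixed_factor s : size (fixed_factor s) = (n - #|psupport s|).+1.
Proof. by rewrite /fixed_factor -big_enum size_prod_XsubC -cardE cardsCs setCK card_ord. Qed.

Lemma coef_laplacian_term_min s k :
    s != 1%g ->
    (forall t, perm_along (wd_arc w) t -> t != 1%g -> k <= #|psupport t|)%N ->
  (laplacian_term s)`_(n - k) = (#|psupport s| == k)%:R * ((-1) ^+ k.+1 * perm_weight s).
Proof.
move=> s1 min_k; rewrite /laplacian_term coefCM.
have supp_le_n : (#|psupport s| <= n)%N by rewrite -[n in (_ <= n)%N]card_ord max_card.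
have [supp_lt | supp_gt | supp_eq] := ltngtP #|psupport s| k.
- rewrite perm_weight_not_along ?mulr0 ?mul0r //; apply: contraTN supp_lt => along.
  by rewrite -leqNgt min_k.
- by rewrite nth_default ?mulr0 ?mul0r // size_fixed_factor; lia.
have : lead_coef (fixed_factor s) = 1 by apply/monicP; apply: monic_prod_XsubC.
rewrite lead_coefE size_fixed_factor supp_eq succnK => ->; rewrite mulr1 mul1r.
have [along | /perm_weight_not_along->] := boolP (perm_along (wd_arc w) s); last first.
  by rewrite !mulr0.
have [x sx] : exists x, x \in psupport s by apply/set0Pn; rewrite psupport_eq0.
have min_s t : perm_along (wd_arc w) t -> t != 1%g -> (#|psupport s| <= #|psupport t|)%N.
  by rewrite supp_eq; apply: min_k.
rewrite (odd_perm_cycle (min_perm_along_cycle along sx min_s)) supp_eq.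
by rewrite -[in RHS]signr_odd.
Qed.

End LaplacianExpansion.

Section NonnegativeWeights.
Variables (R : numDomainType) (n : nat) (w : 'M[R]_n).
Hypothesis w_ge0 : forall i j, 0 <= w i j.

Lemma perm_weight_ge0 s : 0 <= perm_weight w s.
Proof. exact: prodr_ge0. Qed.

Lemma perm_weight_gt0 s : perm_along (wd_arc w) s -> 0 < perm_weight w s.
Proof.
by move=> /forall_inP along; apply: prodr_gt0 => i /along wi; rewrite lt_def w_ge0 andbT.
Qed.

Lemma sum_nontrivial_laplacian_terms_neq0 s :
  perm_along (wd_arc w) s -> s != 1%g -> \sum_(t | t != 1%g) laplacian_term w t != 0.
Proof.
move=> along s1; pose P := [pred t : 'S_n | perm_along (wd_arc w) t && (t != 1%g)].
have P_s : P s by rewrite /= along s1.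
have [t0 /andP[along0 t0_1] min0] := arg_minnP (fun t => #|psupport t|) P_s.
set k := #|psupport t0|.
have min_k t : perm_along (wd_arc w) t -> t != 1%g -> (k <= #|psupport t|)%N.
  by move=> alt t1; apply: min0; rewrite /= alt t1.
have coef_neq0 : (\sum_(t | t != 1%g) laplacian_term w t)`_(n - k) != 0.
  rewrite coef_sum (eq_bigr _ (fun t t1 => coef_laplacian_term_min t1 min_k)).
  under eq_bigr do rewrite mulrCA.
  rewrite -mulr_sumr mulf_eq0 signr_eq0 /= (bigD1 t0) //= eqxx mul1r gt_eqF //.
  rewrite ltr_wpDr ?perm_weight_gt0 // sumr_ge0 // => t _.
  by rewrite mulr_ge0 ?perm_weight_ge0.
by apply: contraNneq coef_neq0 => ->; rewrite coef0.
Qed.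

End NonnegativeWeights.

Theorem theorem2p6 (R : realFieldType) (n : nat) (w : 'M[R]_n)
  (w_ge0 : forall i j, 0 <= w i j)
  (w_noloop : forall i, w i i = 0) :
  spectrum_is (laplacian w) [seq outdeg w i | i <- enum 'I_n]
  <-> acyclic (wd_arc w).
Proof.
have irr : irreflexive (wd_arc w) by move=> i; rewrite /wd_arc w_noloop eqxx.
rewrite spectrum_outdegE //; split => [terms0 | acyc].
  apply/(acyclicP irr)/forall_inP => s along; apply/negPn/negP => s1.
  by have := sum_nontrivial_laplacian_terms_neq0 w_ge0 along s1; rewrite terms0 eqxx.
apply: big1 => s s1; rewrite /laplacian_term perm_weight_not_along ?mulr0 ?mul0r //.
by apply/negP => along; rewrite (acyclic_perm_along_eq1 acyc along) eqxx in s1.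
Qed.
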